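(* Let $(\Omega,S)$ be an equivalenced scheme, $\alpha_0\in\Omega$, and let $u,v\in S^\#$ satisfy condition (A): for all $w,w'\in D(u,v)$, $$\bigcap_{a\in\{u,v\},\ b\in\{w,w'\}} D(a,b)\neq\emptyset.$$ Then for every $w\in D(u,v)$ the set $S_{\alpha_0}(u,v;w)$ is a partition of $\alpha_0u\times\alpha_0v$, and $S_{\alpha_0}(u,v;w)=S_{\alpha_0}(u,v;w')$ for all $w,w'\in D(u,v)$.
   Context: A coherent configuration is a pair $(\Omega,S)$ with $\Omega$ finite and $S$ a partition of $\Omega\times\Omega$ such that the diagonal $1_\Omega$ is a union of elements of $S$, $S$ is closed under $r\mapsto r^*=\{(\beta,\alpha):(\alpha,\beta)\in r\}$, and for $r,s,t\in S$ the number $c_{rs}^t=|\{\beta:(\alpha,\beta)\in r,(\beta,\gamma)\in s\}|$ does not depend on $(\alpha,\gamma)\in t$. A scheme is one with $1_\Omega\in S$; $S^\#=S\setminus\{1_\Omega\}$; $\alpha s=\{\beta:(\alpha,\beta)\in s\}$ and $n_s=|\alpha s|$; the scheme is equivalenced if all $n_s$, $s\in S^\#$, are equal. For relations $r,s\subseteq\Omega\times\Omega$, $r\cdot s=\{(\alpha,\gamma):\exists\beta,(\alpha,\beta)\in r,(\beta,\gamma)\in s\}$; for sets $X,Y$ of relations, $X\cdot Y=\{x\cdot y:x\in X,y\in Y\}$. For $r,s\in S$, $rs$ is the set of elements of $S$ contained in $r\cdot s$, and for $X,Y\subseteq S$, $XY=\bigcup_{x\in X,y\in Y}xy$. Splitting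 set: $D(u,v)=\{w\in S^\#:\ ((uu^* )(vv^* ))\cap ww^*=\{1_\Omega\}\}$ for $u,v\in S^\#$. For $u,v\in S$: $S_{\alpha_0}(u,v)=\{s\cap(\alpha_0u\times\alpha_0v):\ s\in u^*v\}$, and for $w\in S$: $S_{\alpha_0}(u,v;w)=S_{\alpha_0}(u,w)\cdot S_{\alpha_0}(w,v)$. *)

From mathcomp Require Import all_boot.
Set Implicit Arguments. Unset Strict Implicit. Unset Printing Implicit Defensive.

Section CC.
Variable T : finType.

Definition crel := {set T * T}.

Definition diagr : crel := [set p | p.1 == p.2].

Definition trr (r : crel) : crel := [set p | (p.2, p.1) \in r].

Definition compr (r s : crel) : crel :=
  [set p | [exists b, ((p.1, b) \in r) && ((b, p.2) \in s)]].

Definition nbhd (a : T) (s : crel) : {set T} := [set b | (a, b) \in s].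

Definition interset (r s : crel) (a c : T) : {set T} :=
  [set b | ((a, b) \in r) && ((b, c) \in s)].

Definition coherent_configuration (S : {set crel}) : Prop :=
  [/\ partition S [set: T * T],
      (exists2 X : {set crel}, X \subset S & cover X = diagr),
      (forall r, r \in S -> trr r \in S) &
      (forall r s t, r \in S -> s \in S -> t \in S ->
         forall a c a' c', (a, c) \in t -> (a', c') \in t ->
           #|interset r s a c| = #|interset r s a' c'|)].

Definition is_scheme (S : {set crel}) : Prop :=
  coherent_configuration S /\ diagr \in S.

Definition Ssharp (S : {set crel}) : {set crel} := S :\ diagr.

Definition equivalenced (S : {set crel}) : Prop :=
  forall s s', s \in Ssharp S -> s' \in Ssharp S ->
    forall a a', #|nbhd a s| = #|nbhd a' s'|.

Definition prodS (S : {set crel}) (r s : crel) : {set crel} :=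
  [set t in S | t \subset compr r s].

Definition prodSS (S : {set crel}) (X Y : {set crel}) : {set crel} :=
  \bigcup_(x in X) \bigcup_(y in Y) prodS S x y.

Definition Dsplit (S : {set crel}) (u v : crel) : {set crel} :=
  [set w in Ssharp S |
     prodSS S (prodS S u (trr u)) (prodS S v (trr v)) :&: prodS S w (trr w)
       == [set diagr]].

Definition Sloc (S : {set crel}) (a0 : T) (u v : crel) : {set crel} :=
  [set s :&: setX (nbhd a0 u) (nbhd a0 v) | s in prodS S (trr u) v].

Definition Sloc3 (S : {set crel}) (a0 : T) (u v w : crel) : {set crel} :=
  [set compr x y | x in Sloc S a0 u w, y in Sloc S a0 w v].

End CC.

(* Write o for the base point alpha0 and S_o(x,y) for the local pieces
   s :&: (o x * o y), s in x^* y.  The proof is pointwise.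
   1. Coherence is used in one form only: whether a path r-then-s joins
      (a,c) depends only on the class of (a,c) (interset_transfer).
   2. w in D(u,v) says that a pair lying both in (u u^* )(v v^* ) and in
      w w^* is a loop (sep3 u v w).  Since in an equivalenced scheme every
      point has an x-successor for each x in S^#, this yields the two-class
      version u u^* :&: w w^* <= 1 (sep2 u w), and a double count turns
      sep2 x y into: every class is functional on o x * o y.
   3. With these, a "local triangle" lemma shows that composing local
      pieces is determined by one triangle of base points.  Given z in
      D(u,w) :&: D(v,w) and s0 in u^* z, this gives the normal form
      S_o(u,v;w) = {s0_o . r | r in S_o(z,v)}, which does not mention w,
      and which is a partition of o u * o v.
   4. Condition (A) supplies one z serving both w and w', which gives both
      claims of the theorem. *)
From mathcomp Require Import all_boot.
Set Implicit Arguments. Unset Strict Implicit. Unset Printing Implicit Defensive.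

Lemma double_count (T : finType) (A B : {set T}) (R : T -> T -> bool) :
  \sum_(a in A) #|[set e in B | R a e]| = \sum_(e in B) #|[set a in A | R a e]|.
Proof.
have cardE (X : {set T}) (P : pred T) :
    #|[set e in X | P e]| = \sum_(e in X) (P e : nat).
  rewrite -sum1_card big_mkcond [RHS]big_mkcond; apply: eq_bigr => e _.
  by rewrite !inE; case: (e \in X); case: (P e).
under eq_bigr do rewrite cardE.
under [RHS]eq_bigr do rewrite cardE.
exact: exchange_big.
Qed.

Section Scheme.
Variable T : finType.
Local Notation rel := {set T * T}.
Variable S : {set rel}.
Hypothesis S_part : partition S [set: T * T].
Hypothesis S_trr : forall r, r \in S -> trr r \in S.
Hypothesis S_coh : forall r s t, r \in S -> s \in S -> t \in S ->
  forall a c a' c', (a, c) \in t -> (a', c') \in t ->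
    #|interset r s a c| = #|interset r s a' c'|.
Hypothesis S_equiv : equivalenced S.

Lemma trrE (r : rel) x y : ((x, y) \in trr r) = ((y, x) \in r).
Proof. by rewrite inE. Qed.

Lemma comprE (r s : rel) x y :
  ((x, y) \in compr r s) = [exists m, ((x, m) \in r) && ((m, y) \in s)].
Proof. by rewrite inE. Qed.

Lemma sharp_in_S (x : rel) : x \in Ssharp S -> x \in S.
Proof. by rewrite inE => /andP []. Qed.

Lemma prodS_in_S (r s t : rel) : t \in prodS S r s -> t \in S.
Proof. by rewrite inE => /andP []. Qed.

Lemma class_exists (p : T * T) : exists2 t, t \in S & p \in t.
Proof.
case/and3P: S_part => /eqP cover_S _ _.
have : p \in cover S by rewrite cover_S inE.
by case/bigcupP => t Ht Hp; exists t.
Qed.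

Lemma class_uniq (t t' : rel) p :
  t \in S -> t' \in S -> p \in t -> p \in t' -> t = t'.
Proof.
move=> Ht Ht' Hp Hp'; case/and3P: S_part => _ /trivIsetP triv _.
apply: contraTeq isT => neq_tt'.
by move/disjointFr: (triv t t' Ht Ht' neq_tt') => /(_ p Hp); rewrite Hp'.
Qed.

Lemma class_nonempty (t : rel) : t \in S -> exists p, p \in t.
Proof.
move=> Ht; case/and3P: S_part => _ _ S_no0.
by apply/set0Pn; apply: contraNneq S_no0 => <-.
Qed.

Lemma interset_transfer (r s t : rel) a b c a' c' :
  r \in S -> s \in S -> t \in S -> (a, c) \in t -> (a', c') \in t ->
  (a, b) \in r -> (b, c) \in s -> exists2 b', (a', b') \in r & (b', c') \in s.
Proof.
move=> Hr Hs Ht Hac Hac' Hab Hbc.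
have : 0 < #|interset r s a' c'|.
  by rewrite -(S_coh Hr Hs Ht Hac Hac') card_gt0; apply/set0Pn; exists b;
     rewrite inE Hab Hbc.
by rewrite card_gt0 => /set0Pn [b']; rewrite inE => /andP []; exists b'.
Qed.

Lemma prodS_mem (r s t : rel) x m y : r \in S -> s \in S -> t \in S ->
  (x, y) \in t -> (x, m) \in r -> (m, y) \in s -> t \in prodS S r s.
Proof.
move=> Hr Hs Ht Hxy Hxm Hmy; rewrite inE Ht; apply/subsetP => -[x' y'] Hxy'.
have [m' ? ?] := interset_transfer Hr Hs Ht Hxy Hxy' Hxm Hmy.
by rewrite comprE; apply/existsP; exists m'; apply/andP.
Qed.

Lemma prodS_class (r s : rel) x m y : r \in S -> s \in S ->
  (x, m) \in r -> (m, y) \in s -> exists2 t, t \in prodS S r s & (x, y) \in t.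
Proof.
move=> Hr Hs Hxm Hmy; have [t Ht Hxy] := class_exists (x, y).
by exists t => //; apply: prodS_mem Hxm Hmy.
Qed.

Lemma local_succ (x y s : rel) o b0 d0 b : x \in S -> y \in S -> s \in S ->
  (o, b0) \in x -> (o, d0) \in y -> (b0, d0) \in s -> (o, b) \in x ->
  exists2 d, (o, d) \in y & (b, d) \in s.
Proof.
move=> Hx Hy Hs Hb0 Hd0 Hbd0 Hb.
rewrite -trrE in Hb0; rewrite -trrE in Hb; rewrite -trrE in Hd0.
have [d Hbd] := interset_transfer Hs (S_trr Hy) (S_trr Hx) Hb0 Hb Hbd0 Hd0.
by rewrite trrE => Hd; exists d.
Qed.

Lemma local_pred (x y s : rel) o b0 d0 d : x \in S -> y \in S -> s \in S ->
  (o, b0) \in x -> (o, d0) \in y -> (b0, d0) \in s -> (o, d) \in y ->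
  exists2 b, (o, b) \in x & (b, d) \in s.
Proof. by move=> Hx Hy Hs Hb0 Hd0 Hbd0 Hd; apply: interset_transfer Hd0 Hd Hb0 Hbd0. Qed.

Lemma prodS_local_succ (x y s : rel) o b : x \in S -> y \in S ->
  s \in prodS S (trr x) y -> (o, b) \in x -> exists2 d, (o, d) \in y & (b, d) \in s.
Proof.
move=> Hx Hy Hs Hb; have Hs' := prodS_in_S Hs.
have [[c d] Hcd] := class_nonempty Hs'.
move: Hs; rewrite inE => /andP [_ /subsetP /(_ _ Hcd)].
rewrite comprE => /existsP [m /andP [Hcm Hmd]].
rewrite -trrE in Hb; rewrite -trrE in Hmd.
have [d' Hbd'] := interset_transfer Hs' (S_trr Hy) (S_trr Hx) Hcm Hb Hcd Hmd.
by rewrite trrE => Hd'; exists d'.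
Qed.

Lemma sharp_succ (x : rel) p : x \in Ssharp S -> exists e, (p, e) \in x.
Proof.
move=> Hx; have [[c d] Hcd] := class_nonempty (sharp_in_S Hx).
have : 0 < #|nbhd p x|.
  by rewrite (S_equiv Hx Hx p c) card_gt0; apply/set0Pn; exists d; rewrite inE.
by rewrite card_gt0 => /set0Pn [e]; rewrite inE; exists e.
Qed.

Lemma trr_sharp (x : rel) : x \in Ssharp S -> trr x \in Ssharp S.
Proof.
move=> Hx; rewrite !inE S_trr ?sharp_in_S // andbT.
apply: contraTneq Hx => trr_diag; rewrite !inE negb_and negbK; apply/orP; left.
apply/eqP/setP => -[a b]; move/setP: trr_diag => /(_ (b, a)).
by rewrite !inE /= eq_sym.
Qed.

(* sep2 x y: x x^* :&: y y^* lies in the diagonal. *)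
Definition sep2 (x y : rel) := forall p q e1 e2,
  (p, e1) \in x -> (q, e1) \in x -> (p, e2) \in y -> (q, e2) \in y -> p = q.

(* sep3 x y c: (x x^* )(y y^* ) :&: c c^* lies in the diagonal. *)
Definition sep3 (x y c : rel) := forall p m q e1 e2 e3,
  (p, e1) \in x -> (m, e1) \in x -> (m, e2) \in y -> (q, e2) \in y ->
  (p, e3) \in c -> (q, e3) \in c -> p = q.

Lemma Dsplit_sep3 (u v w : rel) : u \in S -> v \in S -> w \in Dsplit S u v ->
  sep3 u v w.
Proof.
move=> Hu Hv; rewrite inE => /andP [/sharp_in_S Hw /eqP D_uvw].
move=> p m q e1 e2 e3 Hpe1 Hme1 Hme2 Hqe2 Hpe3 Hqe3.
rewrite -trrE in Hme1; rewrite -trrE in Hqe2; rewrite -trrE in Hqe3.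
have [t1 Ht1 Hpm] := prodS_class Hu (S_trr Hu) Hpe1 Hme1.
have [t2 Ht2 Hmq] := prodS_class Hv (S_trr Hv) Hme2 Hqe2.
have [t3 Ht3 Hpq] := prodS_class Hw (S_trr Hw) Hpe3 Hqe3.
have : t3 \in [set diagr T].
  rewrite -D_uvw inE Ht3 andbT; apply/bigcupP; exists t1 => //.
  apply/bigcupP; exists t2 => //.
  exact: prodS_mem (prodS_in_S Ht1) (prodS_in_S Ht2) (prodS_in_S Ht3) Hpq Hpm Hmq.
by rewrite inE => /eqP t3_diag; move: Hpq; rewrite t3_diag inE => /eqP.
Qed.

Lemma sep2_sym (x y : rel) : sep2 x y -> sep2 y x.
Proof. by move=> H p q e1 e2 ? ? ? ?; apply: (H p q e2 e1). Qed.

Lemma sep3_sym (x y c : rel) : sep3 x y c -> sep3 y x c.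
Proof. by move=> H p m q e1 e2 e3 ? ? ? ? ? ?; symmetry; apply: (H q m p e2 e1 e3). Qed.

(* A non-diagonal middle factor can be collapsed to a loop at either end. *)
Lemma sep3_sep2l (x y c : rel) : y \in Ssharp S -> sep3 x y c -> sep2 x c.
Proof.
move=> Hy H p q e1 e2 ? ? ? ?; have [e ?] := sharp_succ q Hy.
exact: (H p q q e1 e e2).
Qed.

Lemma sep3_sep2r (x y c : rel) : x \in Ssharp S -> sep3 x y c -> sep2 y c.
Proof.
move=> Hx H p q e1 e2 ? ? ? ?; have [e ?] := sharp_succ p Hx.
exact: (H p p q e e1 e2).
Qed.

Lemma Dsplit_sharp (a b w : rel) : w \in Dsplit S a b -> w \in Ssharp S.
Proof. by rewrite inE => /andP []. Qed.

(* Double count the y-edges from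
   A = b x^* to B = b s (|A| = |B| as the scheme is equivalenced; s = 1 is
   trivial): each a in A has the same number c of y-neighbours in B, by
   coherence, and each e in B has at most one in A, by sep2 x y; hence
   |A| c <= |B| = |A| and c <= 1. *)
Lemma sep2_functional (x y s : rel) o b d d' :
  x \in Ssharp S -> y \in S -> s \in S -> sep2 x y ->
  (o, b) \in x -> (o, d) \in y -> (o, d') \in y -> (b, d) \in s -> (b, d') \in s ->
  d = d'.
Proof.
move=> Hx Hy Hs Hxy Hob Hod Hod' Hbd Hbd'.
have [s_diag | s_nd] := eqVneq s (diagr T).
  by move: Hbd Hbd'; rewrite s_diag !inE /= => /eqP <- /eqP <-.
have Hs' : s \in Ssharp S by rewrite !inE s_nd.
set A := nbhd b (trr x); set B := nbhd b s.
have card_AB : #|A| = #|B| := S_equiv (trr_sharp Hx) Hs' b b.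
set c := #|interset s (trr y) b o|.
have Hbo : (b, o) \in trr x by rewrite trrE.
have sum_A : \sum_(a in A) #|[set e in B | (a, e) \in y]| = #|A| * c.
  rewrite -sum_nat_const; apply: eq_bigr => a; rewrite inE => Hba.
  rewrite /c (S_coh Hs (S_trr Hy) (S_trr (sharp_in_S Hx)) Hbo Hba).
  by apply: eq_card => e; rewrite !inE.
have sum_B : \sum_(e in B) #|[set a in A | (a, e) \in y]| <= #|B|.
  rewrite -sum1_card; apply: leq_sum => e _.
  apply/card_le1_eqP => a a'; rewrite !inE /= => /andP [? ?] /andP [? ?].
  exact: (Hxy a' a b e).
have c_le1 : c <= 1.
  have A_gt0 : 0 < #|A| by rewrite card_gt0; apply/set0Pn; exists o; rewrite inE.
  by rewrite -(leq_pmul2l A_gt0) muln1 -sum_A double_count card_AB.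
by move/card_le1_eqP: c_le1; apply; rewrite !inE /= ?Hbd ?Hbd' ?Hod ?Hod'.
Qed.

Lemma local_triangle (a b c p q t : rel) o al0 xi0 be0 :
  a \in Ssharp S -> b \in Ssharp S -> c \in Ssharp S ->
  p \in S -> q \in S -> t \in S -> sep3 a b c -> sep2 a b ->
  (o, al0) \in a -> (o, xi0) \in c -> (o, be0) \in b ->
  (al0, xi0) \in p -> (xi0, be0) \in q -> (al0, be0) \in t ->
  forall al xi be, (o, al) \in a -> (o, xi) \in c -> (o, be) \in b ->
  (al, xi) \in p -> (xi, be) \in q <-> (al, be) \in t.
Proof.
move=> Ha Hb Hc Hp Hq Ht Habc Hab Hal0 Hxi0 Hbe0 Hp0 Hq0 Ht0.
have [Ha' Hb' Hc'] := And3 (sharp_in_S Ha) (sharp_in_S Hb) (sharp_in_S Hc).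
have Hac : sep2 a c := sep3_sep2l Hb Habc.
have Hcb : sep2 c b := sep2_sym (sep3_sep2r Ha Habc).
have t_to_q al xi be : (o, al) \in a -> (o, xi) \in c -> (o, be) \in b ->
    (al, xi) \in p -> (al, be) \in t -> (xi, be) \in q.
  move=> Hal Hxi Hbe Hpx Htx.
  have [xi2 Hp2 Hq2] := interset_transfer Hp Hq Ht Ht0 Htx Hp0 Hq0.
  (* the apexes over (al, xi2) and (xi2, be) are both o *)
  have Hoal0 : (al0, o) \in trr a by rewrite trrE.
  have [a1] := interset_transfer (S_trr Ha') Hc' Hp Hp0 Hp2 Hoal0 Hxi0.
  rewrite trrE => Ha1 Hc1.
  have Hoxi0 : (xi0, o) \in trr c by rewrite trrE.
  have [a2] := interset_transfer (S_trr Hc') Hb' Hq Hq0 Hq2 Hoxi0 Hbe0.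
  rewrite trrE => Hc2 Hb2.
  have a12 : a1 = a2 := Habc a1 o a2 al be xi2 Ha1 Hal Hbe Hb2 Hc1 Hc2.
  have a1o : a1 = o by apply: (Hab a1 o al be Ha1 Hal) => //; rewrite a12.
  rewrite a1o in Hc1.
  by rewrite (sep2_functional Ha Hc' Hp Hac Hal Hxi Hc1 Hpx Hp2).
move=> al xi be Hal Hxi Hbe Hpx; split; last exact: t_to_q.
move=> Hqx; have [be' Hbe' Htbe'] := local_succ Ha' Hb' Ht Hal0 Hbe0 Ht0 Hal.
have Hq' := t_to_q _ _ _ Hal Hxi Hbe' Hpx Htbe'.
by rewrite (sep2_functional Hc Hb' Hq Hcb Hxi Hbe Hbe' Hqx Hq').
Qed.

Lemma Sloc_mem (x y t : rel) o b d : x \in S -> y \in S -> t \in S ->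
  (o, b) \in x -> (o, d) \in y -> (b, d) \in t ->
  t :&: setX (nbhd o x) (nbhd o y) \in Sloc S o x y.
Proof.
move=> Hx Hy Ht Hb Hd Hbd; apply: imset_f.
by apply: prodS_mem (S_trr Hx) Hy Ht Hbd _ Hd; rewrite trrE.
Qed.

Lemma prodS_nonempty (u z : rel) : u \in Ssharp S -> z \in Ssharp S ->
  exists s0, s0 \in prodS S (trr u) z.
Proof.
move=> Hu Hz; have [[p q] Hpq] := class_nonempty (sharp_in_S Hu).
have [e Hpe] := sharp_succ p Hz.
have Hqp : (q, p) \in trr u by rewrite trrE.
by have [s0 Hs0 _] := prodS_class (S_trr (sharp_in_S Hu)) (sharp_in_S Hz) Hqp Hpe;
  exists s0.
Qed.

(* Two local triangles through the class
   of (x0, d0) relate both sides. *)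
Lemma local_compose (u v w z s0 s1 s2 t : rel) o b0 x0 d0 g0 :
  u \in Ssharp S -> v \in Ssharp S -> w \in Ssharp S -> z \in Ssharp S ->
  sep3 u w z -> sep3 w v z -> sep2 u w -> sep2 w v ->
  s0 \in S -> s1 \in S -> s2 \in S -> t \in S ->
  (o, b0) \in u -> (o, x0) \in z -> (o, d0) \in w -> (o, g0) \in v ->
  (b0, x0) \in s0 -> (b0, d0) \in s1 -> (d0, g0) \in s2 -> (x0, g0) \in t ->
  compr (s1 :&: setX (nbhd o u) (nbhd o w)) (s2 :&: setX (nbhd o w) (nbhd o v)) =
  compr (s0 :&: setX (nbhd o u) (nbhd o z)) (t :&: setX (nbhd o z) (nbhd o v)).
Proof.
move=> Hu Hv Hw Hz Huwz Hwvz Huw Hwv Hs0 Hs1 Hs2 Ht Hb0 Hx0 Hd0 Hg0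
  Hbx Hbd Hdg Hxg.
have [e He Hxd] := class_exists (x0, d0).
have Hdx : (d0, x0) \in trr e by rewrite trrE.
have tri_uzw := local_triangle Hu Hw Hz Hs0 He Hs1 Huwz Huw Hb0 Hx0 Hd0 Hbx Hxd Hbd.
have tri_wzv :=
  local_triangle Hw Hv Hz (S_trr He) Ht Hs2 Hwvz Hwv Hd0 Hx0 Hg0 Hdx Hxg Hdg.
apply/setP => -[be ga]; rewrite !comprE; apply/existsP/existsP => -[m].
  rewrite !inE /= => /andP [/andP [Hbm /andP [Hbe Hm]] /andP [Hmg /andP [_ Hga]]].
  have [xi Hxi Hbxi] := local_succ (sharp_in_S Hu) (sharp_in_S Hz) Hs0 Hb0 Hx0 Hbx Hbe.
  have Hxim : (xi, m) \in e by apply/(tri_uzw be xi m Hbe Hxi Hm Hbxi).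
  have Hmxi : (m, xi) \in trr e by rewrite trrE.
  have Hxig : (xi, ga) \in t by apply/(tri_wzv m xi ga Hm Hxi Hga Hmxi).
  by exists xi; rewrite !inE /= Hbxi Hbe Hxi Hxig Hga.
rewrite !inE /= => /andP [/andP [Hbm /andP [Hbe Hm]] /andP [Hmg /andP [_ Hga]]].
have [d Hd Hbd'] := local_succ (sharp_in_S Hu) (sharp_in_S Hw) Hs1 Hb0 Hd0 Hbd Hbe.
have Hmd : (m, d) \in e by apply/(tri_uzw be m d Hbe Hm Hd Hbm).
have Hdm : (d, m) \in trr e by rewrite trrE.
have Hdg' : (d, ga) \in s2 by apply/(tri_wzv d m ga Hd Hm Hga Hdm).
by exists d; rewrite !inE /= Hbd' Hbe Hd Hdg' Hga.
Qed.

Definition Sloc_via o (u v z s0 : rel) : {set rel} :=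
  [set compr (s0 :&: setX (nbhd o u) (nbhd o z)) r | r in Sloc S o z v].

Lemma Sloc3_normal_form o (u v w z s0 : rel) :
  u \in Ssharp S -> v \in Ssharp S -> w \in Dsplit S u v ->
  z \in Dsplit S u w -> z \in Dsplit S v w -> s0 \in prodS S (trr u) z ->
  Sloc3 S o u v w = Sloc_via o u v z s0.
Proof.
move=> Hu Hv Hw_uv Hz_uw Hz_vw Hs0.
have [Hw Hz] := (Dsplit_sharp Hw_uv, Dsplit_sharp Hz_uw).
have [Hu' Hv' Hw' Hz'] := And4 (sharp_in_S Hu) (sharp_in_S Hv) (sharp_in_S Hw)
  (sharp_in_S Hz).
have Huvw := Dsplit_sep3 Hu' Hv' Hw_uv.
have compose := local_compose Hu Hv Hw Hz (Dsplit_sep3 Hu' Hw' Hz_uw)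
  (sep3_sym (Dsplit_sep3 Hv' Hw' Hz_vw)) (sep3_sep2l Hv Huvw)
  (sep2_sym (sep3_sep2r Hu Huvw)) (prodS_in_S Hs0).
apply/setP => X; apply/imset2P/imsetP.
  case=> _ _ /imsetP [s1 Hs1 ->] /imsetP [s2 Hs2 ->] ->.
  have [b0 Hb0] := sharp_succ o Hu.
  have [d0 Hd0 Hbd] := prodS_local_succ Hu' Hw' Hs1 Hb0.
  have [g0 Hg0 Hdg] := prodS_local_succ Hw' Hv' Hs2 Hd0.
  have [x0 Hx0 Hbx] := prodS_local_succ Hu' Hz' Hs0 Hb0.
  have [t Ht Hxg] := class_exists (x0, g0).
  exists (t :&: setX (nbhd o z) (nbhd o v)); first exact: Sloc_mem Hxg.
  exact: compose (prodS_in_S Hs1) (prodS_in_S Hs2) Ht Hb0 Hx0 Hd0 Hg0 Hbx Hbd Hdg Hxg.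
case=> _ /imsetP [t Ht ->] ->.
have [x0 Hx0] := sharp_succ o Hz.
have [g0 Hg0 Hxg] := prodS_local_succ Hz' Hv' Ht Hx0.
have [b1 Hb1] := sharp_succ o Hu.
have [x1 Hx1 Hbx1] := prodS_local_succ Hu' Hz' Hs0 Hb1.
have [b0 Hb0 Hbx] := local_pred Hu' Hz' (prodS_in_S Hs0) Hb1 Hx1 Hbx1 Hx0.
have [d0 Hd0] := sharp_succ o Hw.
have [s1 Hs1 Hbd] := class_exists (b0, d0).
have [s2 Hs2 Hdg] := class_exists (d0, g0).
apply: (Imset2spec (Sloc_mem Hu' Hw' Hs1 Hb0 Hd0 Hbd)
  (Sloc_mem Hw' Hv' Hs2 Hd0 Hg0 Hdg)).
symmetry.
exact: compose Hs1 Hs2 (prodS_in_S Ht) Hb0 Hx0 Hd0 Hg0 Hbx Hbd Hdg Hxg.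
Qed.

(* The normal form is a partition of o u * o v: blocks cover since s0 has
   no empty row, they are disjoint since s0 is functional on o u * o z
   (sep2 u z) and classes are disjoint, and none is empty. *)
Lemma Sloc_via_partition o (u v z s0 : rel) :
  u \in Ssharp S -> v \in Ssharp S -> z \in Ssharp S -> sep2 u z ->
  s0 \in prodS S (trr u) z ->
  partition (Sloc_via o u v z s0) (setX (nbhd o u) (nbhd o v)).
Proof.
move=> Hu Hv Hz Huz Hs0.
have [Hu' Hv' Hz'] := And3 (sharp_in_S Hu) (sharp_in_S Hv) (sharp_in_S Hz).
have via_mem t xi ga : t \in S -> (o, xi) \in z -> (o, ga) \in v -> (xi, ga) \in t ->
    compr (s0 :&: setX (nbhd o u) (nbhd o z)) (t :&: setX (nbhd o z) (nbhd o v))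
      \in Sloc_via o u v z s0.
  by move=> Ht Hxi Hga Hxg; apply: imset_f; apply: Sloc_mem Hxg.
apply/and3P; split.
- apply/eqP/setP => -[be ga]; apply/bigcupP/idP.
    case=> _ /imsetP [_ /imsetP [t _ ->] ->].
    rewrite comprE => /existsP [xi]; rewrite !inE /=.
    by case/andP => /andP [_ /andP [-> _]] /andP [_ /andP [_ ->]].
  rewrite !inE /= => /andP [Hbe Hga].
  have [xi Hxi Hbx] := prodS_local_succ Hu' Hz' Hs0 Hbe.
  have [t Ht Hxg] := class_exists (xi, ga).
  exists (compr (s0 :&: setX (nbhd o u) (nbhd o z))
                (t :&: setX (nbhd o z) (nbhd o v))); first exact: via_mem Hxg.
  by rewrite comprE; apply/existsP; exists xi; rewrite !inE /= Hbx Hbe Hxi Hxg Hga.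
- apply/trivIsetP => _ _ /imsetP [_ /imsetP [t1 Ht1 ->] ->]
    /imsetP [_ /imsetP [t2 Ht2 ->] ->].
  apply: contraNT; rewrite -setI_eq0 => /set0Pn [[be ga]].
  rewrite inE !comprE => /andP [/existsP [xi1] H1 /existsP [xi2] H2].
  move: H1 H2; rewrite !inE /=.
  case/andP => /andP [Hb1 /andP [Hbe Hx1]] /andP [Ht1g _].
  case/andP => /andP [Hb2 /andP [_ Hx2]] /andP [Ht2g _].
  have xi12 := sep2_functional Hu Hz' (prodS_in_S Hs0) Huz Hbe Hx1 Hx2 Hb1 Hb2.
  rewrite -xi12 in Ht2g.
  by rewrite (class_uniq (prodS_in_S Ht1) (prodS_in_S Ht2) Ht1g Ht2g).
- apply/imsetP => -[_ /imsetP [t Ht ->] block0].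
  have [x0 Hx0] := sharp_succ o Hz.
  have [g0 Hg0 Hxg] := prodS_local_succ Hz' Hv' Ht Hx0.
  have [b1 Hb1] := sharp_succ o Hu.
  have [x1 Hx1 Hbx1] := prodS_local_succ Hu' Hz' Hs0 Hb1.
  have [b0 Hb0 Hbx] := local_pred Hu' Hz' (prodS_in_S Hs0) Hb1 Hx1 Hbx1 Hx0.
  have : (b0, g0) \in (set0 : {set T * T}).
    by rewrite block0 comprE; apply/existsP; exists x0;
       rewrite !inE /= Hbx Hb0 Hx0 Hxg Hg0.
  by rewrite inE.
Qed.

Lemma common_splitter (u v w w' : rel) :
  (forall w w', w \in Dsplit S u v -> w' \in Dsplit S u v ->
     \bigcap_(a in [set u; v]) \bigcap_(b in [set w; w']) Dsplit S a b != set0) ->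
  w \in Dsplit S u v -> w' \in Dsplit S u v ->
  exists z, [/\ z \in Dsplit S u w, z \in Dsplit S v w,
               z \in Dsplit S u w' & z \in Dsplit S v w'].
Proof.
move=> condA Hw Hw'; case/set0Pn: (condA w w' Hw Hw') => z /bigcapP Hz.
have /bigcapP Hzu := Hz u (set21 u v); have /bigcapP Hzv := Hz v (set22 u v).
by exists z; split; [apply: Hzu | apply: Hzv | apply: Hzu | apply: Hzv];
  rewrite !inE eqxx ?orbT.
Qed.
End Scheme.

Theorem lemma4p3 (T : finType) (S : {set {set T * T}}) (a0 : T)
  (u v : {set T * T}) :
  is_scheme S -> equivalenced S ->
  u \in Ssharp S -> v \in Ssharp S ->
  (forall w w', w \in Dsplit S u v -> w' \in Dsplit S u v ->
     \bigcap_(a in [set u; v]) \bigcap_(b in [set w; w']) Dsplit S a b != set0) ->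
  (forall w, w \in Dsplit S u v ->
     partition (Sloc3 S a0 u v w) (setX (nbhd a0 u) (nbhd a0 v))) /\
  (forall w w', w \in Dsplit S u v -> w' \in Dsplit S u v ->
     Sloc3 S a0 u v w = Sloc3 S a0 u v w').
Proof.
move=> [[S_part _ S_trr S_coh] _] S_equiv Hu Hv condA.
have normal_form := Sloc3_normal_form S_part S_trr S_coh S_equiv a0 Hu Hv.
have some_s0 z : z \in Ssharp S -> exists s0, s0 \in prodS S (trr u) z.
  exact: (prodS_nonempty S_part S_trr S_coh S_equiv Hu).
split=> [w Hw | w w' Hw Hw'].
  have [z [Hz_uw Hz_vw _ _]] := common_splitter condA Hw Hw.
  have Hz := Dsplit_sharp Hz_uw; have [s0 Hs0] := some_s0 z Hz.
  rewrite (normal_form w z s0 Hw Hz_uw Hz_vw Hs0).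
  have Huwz := Dsplit_sep3 S_part S_trr S_coh (sharp_in_S Hu)
    (sharp_in_S (Dsplit_sharp Hw)) Hz_uw.
  have Huz := sep3_sep2l S_part S_equiv (Dsplit_sharp Hw) Huwz.
  exact (Sloc_via_partition S_part S_trr S_coh S_equiv a0 Hu Hv Hz Huz Hs0).
have [z [Hz_uw Hz_vw Hz_uw' Hz_vw']] := common_splitter condA Hw Hw'.
have [s0 Hs0] := some_s0 z (Dsplit_sharp Hz_uw).
by rewrite (normal_form w z s0 Hw Hz_uw Hz_vw Hs0)
  (normal_form w' z s0 Hw' Hz_uw' Hz_vw' Hs0).
Qed.
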